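(* Let $k\ge n\ge1$ and let $\bar K$ be the transition matrix of the Burnside process on $\Pi_n$ (defined in the context). Let $x,y\in\Pi_n$ have $j_x$ and $j_y$ blocks respectively, and suppose $j_x\le j_y$. Then $$\bar K(x,y)=\sum_{j=j_y}^{\min(j_x+j_y,\,k)}\frac{j_x!\,j_y!}{(j-j_x)!\,(j-j_y)!\,(j_x+j_y-j)!}\,E\left[\frac{1}{(Y_j+j)^n}\right],$$ where $Y_j$ denotes the number of fixed points of a uniformly random permutation in $S_{k-j}$ (with $Y_k=0$). If $j_x>j_y$, then $\bar K(x,y)=\bar K(y,x)$.
   Context: $S_k$ acts on $[k]^n$ by $\sigma(u_1,\dots,u_n)=(\sigma(u_1),\dots,\sigma(u_n))$. The Burnside process on $[k]^n$ is the Markov chain which, from $u$, chooses $\sigma$ uniformly among permutations of $[k]$ fixing every value appearing in $u$, then produces $v\in[k]^n$ by choosing each coordinate independently and uniformly among the fixed points of $\sigma$; its transition matrix is $K(u,v)=\sum_{\sigma\in G_u\cap G_v}\frac{1}{|G_u|\,\mathrm{fp}(\sigma)^n}$ with $G_u$ the stabilizer of $u$ and $\mathrm{fp}(\sigma)$ the number of fixed points. $\Pi_n$ is the set of set partitions of $[n]$; to $u\in[k]^n$ corresponds the set partition in which $i,j$ lie in the same block iff $u_i=u_j$, and the orbits of the action are exactly the classes of vectors with the same set partition. The Burnside process on $\Pi_n$ is the lumped chain: $\bar K(x,y)=\sum_{v\text{ with partition }y}K(u,v)$ for any $u$ with partition $x$. *)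

From mathcomp Require Import all_boot all_order all_algebra all_fingroup.
Set Implicit Arguments. Unset Strict Implicit. Unset Printing Implicit Defensive.
Import GRing.Theory Num.Theory.
Local Open Scope ring_scope.

Definition vec (n k : nat) := {ffun 'I_n -> 'I_k}.

Definition fp (m : nat) (s : {perm 'I_m}) : nat := #|[pred a | s a == a]|.

Definition stab (n k : nat) (u : vec n k) : {set {perm 'I_k}} :=
  [set s : {perm 'I_k} | [forall i, s (u i) == u i]].

Definition Kmat (n k : nat) (u v : vec n k) : rat :=
  \sum_(s in stab u :&: stab v)
     1 / (#|stab u|%:R * ((fp s)%:R ^+ n)).

Definition setpart (n k : nat) (u : vec n k) : {set {set 'I_n}} :=
  [set [set j | u j == u i] | i : 'I_n].

Definition is_setpart (n : nat) (x : {set {set 'I_n}}) : bool :=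
  partition x [set: 'I_n].

(* lumped chain on Pi_n: sum over v with partition y, starting from a
   (chosen) u with partition x; 0 if no such u exists (never the case
   when x is a set partition with at most k blocks). *)
Definition Kbar (n k : nat) (x y : {set {set 'I_n}}) : rat :=
  match [pick u : vec n k | setpart u == x] with
  | Some u => \sum_(v : vec n k | setpart v == y) Kmat u v
  | None => 0
  end.

Definition EY (n k j : nat) : rat :=
  (\sum_(s : {perm 'I_(k - j)}) 1 / ((fp s + j)%:R ^+ n))
    / #|{perm 'I_(k - j)}|%:R.

From mathcomp Require Import all_boot all_order all_algebra all_fingroup.
From mathcomp Require Import zify.
From mathcomp.algebra_tactics Require Import ring.
Set Implicit Arguments. Unset Strict Implicit. Unset Printing Implicit Defensive.
Import GRing.Theory Num.Theory.

(* A permutation stabilises both u and v iff it fixes pointwise the union D of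
   their images, i.e. iff it permutes the k - |D| remaining letters; its fixed
   points are those of this permutation together with the |D| points of D.
   Hence K(u,v) = (k - |D|)! / (k - j_x)! * E[1 / (Y_|D| + |D|)^n] only depends
   on i = |im u ∩ im v|, through |D| = j_x + j_y - i.  The vectors v with
   partition y meeting im u in i values are obtained by choosing their image
   set (C(j_x, i) C(k - j_x, j_y - i) ways) and a bijection from the blocks of
   y onto it (j_y! ways).  After the change of index j = j_x + j_y - i the
   summand becomes symmetric in j_x and j_y. *)

(* [fp] for an arbitrary finite type; [fp s] and [nfix s] are convertible. *)
Definition nfix (T : finType) (s : {perm T}) : nat := #|[pred t | s t == t]|.

Section PermConjugation.
Variables (T1 T2 : finType) (h : T1 -> T2) (g : T2 -> T1).
Hypotheses (hK : cancel h g) (gK : cancel g h).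

Definition conj_perm (q : {perm T2}) : {perm T1} :=
  perm (inj_comp (can_inj gK) (inj_comp (@perm_inj _ q) (can_inj hK))).

Lemma nfix_conj_perm q : nfix (conj_perm q) = nfix q.
Proof.
rewrite /nfix -(card_image (can_inj hK)); apply: eq_card => t; rewrite inE.
apply/imageP/idP => [[x]|qt]; last by exists (g t); rewrite ?gK // inE permE /= gK (eqP qt).
by rewrite inE permE /= => /eqP qx ->; rewrite -{2}qx gK.
Qed.

Lemma big_nfix_conj (R : Type) (idx : R) (op : Monoid.com_law idx) (F : nat -> R) :
  \big[op/idx]_(p : {perm T1}) F (nfix p) = \big[op/idx]_(q : {perm T2}) F (nfix q).
Proof.
pose push (p : {perm T1}) : {perm T2} :=
  perm (inj_comp (can_inj hK) (inj_comp (@perm_inj _ p) (can_inj gK))).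
rewrite (reindex conj_perm) /=; first by apply: eq_bigr => q _; rewrite nfix_conj_perm.
by exists push => p _; apply/permP => x; rewrite /conj_perm !permE /= permE /= ?gK ?hK.
Qed.

End PermConjugation.

Section PermExtension.
Variables (T : finType) (S : {set T}).
Notation sT := {x : T | x \in S}.

Definition ext_fun (p : {perm sT}) (t : T) : T := oapp (fun x => val (p x)) t (insub t).

Lemma ext_fun_inj p : injective (ext_fun p).
Proof.
move=> s t; rewrite /ext_fun.
case: insubP => [x _ <-|sS]; case: insubP => [y _ <-|tS] //=.
- by move/val_inj/perm_inj => ->.
- by move=> E; rewrite -E (valP (p x)) in tS.
- by move=> E; rewrite E (valP (p y)) in sS.
Qed.

Definition ext_perm p : {perm T} := perm (@ext_fun_inj p).

Lemma ext_perm_val p (x : sT) : ext_perm p (val x) = val (p x).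
Proof. by rewrite permE /ext_fun valK. Qed.

Lemma ext_perm_out p t : t \notin S -> ext_perm p t = t.
Proof. by move=> tS; rewrite permE /ext_fun insubN. Qed.

Lemma ext_perm_inj : injective ext_perm.
Proof.
by move=> p q epq; apply/permP => x; apply: val_inj; rewrite -!ext_perm_val epq.
Qed.

Lemma perm_on_ext_perm p : perm_on S (ext_perm p).
Proof. by apply/subsetP => t; rewrite inE; apply: contraR => /ext_perm_out ->. Qed.

Lemma perm_on_imset_ext : [set s | perm_on S s] = ext_perm @: setT.
Proof.
apply/esym/eqP; rewrite eqEcard; apply/andP; split.
  by apply/subsetP => _ /imsetP[p _ ->]; rewrite inE perm_on_ext_perm.
rewrite cardsE card_perm card_imset; last exact: ext_perm_inj.
rewrite cardsT (eq_card (B := perm_on [set: sT])) => [|q]; last first.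
  by rewrite unfold_in; apply/esym/subsetP => x; rewrite inE.
by rewrite card_perm cardsT card_sig.
Qed.

Lemma nfix_ext_perm p : nfix (ext_perm p) = nfix p + #|~: S|.
Proof.
set F := [set t | ext_perm p t == t].
have FS : F :&: S = val @: [set x | p x == x].
  apply/setP => t; rewrite !inE; apply/andP/imsetP => [[Ft tS]|[x]].
    by exists (Sub t tS); rewrite // inE; apply/eqP/val_inj; rewrite -ext_perm_val (eqP Ft).
  by rewrite inE => /eqP px ->; rewrite ext_perm_val px (valP x).
have FC : F :\: S = ~: S.
  apply/setP => t; rewrite !inE; case: (boolP (t \in S)) => //= tS.
  by rewrite ext_perm_out ?eqxx.
have -> : nfix (ext_perm p) = #|F| by rewrite cardsE.
have -> : nfix p = #|[set x | p x == x]| by rewrite cardsE.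
by rewrite -(cardsID S F) FS FC card_imset //; apply: val_inj.
Qed.

End PermExtension.

Lemma big_perm_on (T : finType) (S : {set T}) m
    (R : Type) (idx : R) (op : Monoid.com_law idx) (F : nat -> R) :
  #|S| = m ->
  \big[op/idx]_(s | perm_on S s) F (nfix s)
  = \big[op/idx]_(p : {perm 'I_m}) F (fp p + #|~: S|).
Proof.
move=> cardS.
rewrite (eq_bigl (mem [set s | perm_on S s])) => [|s]; last by rewrite !inE.
rewrite perm_on_imset_ext big_imset /=; last by move=> p q _ _; apply: ext_perm_inj.
under eq_bigr do rewrite nfix_ext_perm.
have card_sT : #|{: {x : T | x \in S}}| = m by rewrite card_sig -cardS; apply: eq_card.
pose h (x : {x : T | x \in S}) : 'I_m := cast_ord card_sT (enum_rank x).
pose g (i : 'I_m) : {x : T | x \in S} := enum_val (cast_ord (esym card_sT) i).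
have hK : cancel h g by move=> x; rewrite /g /h cast_ordK enum_rankK.
have gK : cancel g h by move=> i; rewrite /g /h enum_valK cast_ordKV.
rewrite -(big_nfix_conj hK gK _ (fun j => F (j + #|~: S|))).
by apply: eq_bigl => p; rewrite inE.
Qed.

Definition im n k (v : vec n k) : {set 'I_k} := [set v i | i : 'I_n].

Lemma cardsC_ord k (A : {set 'I_k}) : #|~: A| = k - #|A|.
Proof. by have := cardsC A; rewrite card_ord; lia. Qed.

Lemma stabI_perm_on n k (u v : vec n k) :
  stab u :&: stab v = [set s | perm_on (~: (im u :|: im v)) s].
Proof.
apply/setP => s; rewrite !inE; apply/andP/subsetP => [[/forallP su /forallP sv] t|fixD].
  rewrite !inE; apply: contra => /orP[] /imsetP[i _ ->]; [exact: su | exact: sv].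
have fixD' t : t \in im u :|: im v -> s t == t.
  by move=> tD; apply/negPn/negP => /fixD; rewrite inE tD.
by split; apply/forallP => i; apply: fixD'; rewrite inE imset_f ?orbT.
Qed.

Lemma card_stab n k (u : vec n k) : #|stab u| = (k - #|im u|)`!.
Proof.
by rewrite -[stab u]setIid stabI_perm_on setUid cardsE card_perm cardsC_ord.
Qed.

Lemma card_imset_kernel (I A B : finType) (f : I -> A) (g : I -> B) :
  (forall i j, (f i == f j) = (g i == g j)) ->
  #|[set f i | i : I]| = #|[set g i | i : I]|.
Proof.
move=> fg; set P := [set (f i, g i) | i : I].
have -> : [set f i | i : I] = fst @: P by rewrite -imset_comp.
have -> : [set g i | i : I] = snd @: P by rewrite -imset_comp.
rewrite [LHS]card_in_imset => [|_ _ /imsetP[i _ ->] /imsetP[j _ ->] /= eq_ij]; last first.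
  by rewrite eq_ij (eqP (_ : g i == g j)) // -fg eq_ij.
rewrite [RHS]card_in_imset // => _ _ /imsetP[i _ ->] /imsetP[j _ ->] /= eq_ij.
by rewrite eq_ij (eqP (_ : f i == f j)) // fg eq_ij.
Qed.

Section SetPartition.
Variables (n : nat) (y : {set {set 'I_n}}).
Hypothesis y_part : is_setpart y.

Let cover_y : cover y = [set: 'I_n]. Proof. by case/and3P: y_part => /eqP. Qed.

Lemma trivIset_setpart : trivIset y. Proof. by case/and3P: y_part. Qed.

Lemma setpart_neq0 B : B \in y -> B != set0.
Proof. by move=> yB; apply: contraTneq yB => ->; case/and3P: y_part. Qed.

Lemma pblock_setpart i : pblock y i \in y.
Proof. by apply: pblock_mem; rewrite cover_y inE. Qed.

Lemma pblocks_setpart : [set pblock y i | i : 'I_n] = y.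
Proof.
apply/setP => B; apply/imsetP/idP => [[i _ ->]|yB]; first exact: pblock_setpart.
have /set0Pn[i Bi] := setpart_neq0 yB.
by exists i; rewrite // (def_pblock trivIset_setpart yB Bi).
Qed.

Lemma card_setpart_le : #|y| <= n.
Proof. by rewrite -pblocks_setpart (leq_trans (leq_imset_card _ _)) ?card_ord. Qed.

Lemma eq_pblock_setpart i j : (pblock y i == pblock y j) = (j \in pblock y i).
Proof. by rewrite eq_pblock ?trivIset_setpart // cover_y inE. Qed.

Lemma setpartP k (v : vec n k) :
  setpart v = y <-> forall i j, (v i == v j) = (pblock y i == pblock y j).
Proof.
split => [vy i j|v_pblock].
  rewrite eq_pblock_setpart; have -> : pblock y i = [set l | v l == v i].
    by apply: def_pblock; rewrite ?trivIset_setpart ?inE // -vy; apply: imset_f.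
  by rewrite inE eq_sym.
rewrite -pblocks_setpart; apply: eq_imset => i; apply/setP => l.
by rewrite inE eq_sym v_pblock eq_pblock_setpart.
Qed.

Lemma card_im_setpart k (v : vec n k) : setpart v = y -> #|im v| = #|y|.
Proof.
by move/setpartP => v_pblock; rewrite -pblocks_setpart; apply: card_imset_kernel.
Qed.

End SetPartition.

Lemma card_sets_meet (T : finType) (A : {set T}) b i : i <= b ->
  #|[set C : {set T} | (#|C| == b) && (#|A :&: C| == i)]|
  = 'C(#|A|, i) * 'C(#|~: A|, b - i).
Proof.
move=> le_ib; rewrite -!cards_draws -cardsX.
pose split_by_A (C : {set T}) := (A :&: C, ~: A :&: C).
have split_inj : injective split_by_A.
  move=> C D [eqA eqCA]; rewrite -(setID C A) -(setID D A) !setDE.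
  by rewrite ![_ :&: A]setIC ![_ :&: ~: A]setIC eqA eqCA.
rewrite -(card_imset [set C : {set T} | _] split_inj); apply: eq_card => -[B1 B2].
rewrite !inE /=; apply/imsetP/andP => [[C] |[/andP[B1A /eqP cardB1] /andP[B2A /eqP cardB2]]].
  rewrite inE => /andP[/eqP cardC /eqP cardAC] [-> ->].
  rewrite !subsetIl cardAC eqxx; split => //.
  by rewrite -cardC -cardAC -(cardsID A C) /= setDE [C :&: A]setIC [C :&: ~: A]setIC addKn.
have AB2 : A :&: B2 = set0 by apply/eqP; rewrite -subset0 -(setICr A) setIS.
have CAB1 : ~: A :&: B1 = set0 by apply/eqP; rewrite -subset0 -(setICr A) setIC setSI.
have B12 : B1 :&: B2 = set0 by apply/eqP; rewrite -subset0 -(setICr A) setISS.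
have AB1 : A :&: B1 = B1 by apply/setIidPr.
have CAB2 : ~: A :&: B2 = B2 by apply/setIidPr.
exists (B1 :|: B2); last by rewrite /split_by_A !setIUr AB1 AB2 CAB1 CAB2 setU0 set0U.
rewrite inE cardsU B12 cards0 subn0 cardB1 cardB2 subnKC //.
by rewrite setIUr AB1 AB2 setU0 cardB1 !eqxx.
Qed.

Section PartitionVectors.
Variables (n k : nat) (y : {set {set 'I_n}}).
Hypothesis y_part : is_setpart y.

Notation block := {B : {set 'I_n} | B \in y}.

Definition block_of (i : 'I_n) : block := Sub (pblock y i) (pblock_setpart y_part i).

Lemma block_of_surj (B : block) : exists i, block_of i == B.
Proof.
have /set0Pn[i Bi] := setpart_neq0 y_part (valP B).
by exists i; rewrite -val_eqE /= (def_pblock (trivIset_setpart y_part) (valP B) Bi).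
Qed.

Definition vec_of_blocks (f : {ffun block -> 'I_k}) : vec n k := [ffun i => f (block_of i)].

Lemma setpart_vec_of_blocks (f : {ffun block -> 'I_k}) :
  injective f -> setpart (vec_of_blocks f) = y.
Proof. by move=> f_inj; apply/setpartP => // i j; rewrite !ffunE (inj_eq f_inj). Qed.

Lemma vec_of_blocksP (v : vec n k) :
  setpart v = y -> exists2 f : {ffun block -> 'I_k}, injective f & vec_of_blocks f = v.
Proof.
move/(setpartP y_part) => v_pblock.
pose f := [ffun B => v (xchoose (block_of_surj B))].
have fE i : f (block_of i) = v i.
  by rewrite ffunE; apply/eqP; rewrite v_pblock; exact: xchooseP (block_of_surj _).
exists f; last by apply/ffunP => i; rewrite ffunE fE.
move=> B1 B2; have [i /eqP <-] := block_of_surj B1; have [j /eqP <-] := block_of_surj B2.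
by rewrite !fE => /eqP; rewrite v_pblock => /eqP pb; apply: val_inj.
Qed.

Lemma card_setpart_sub (C : {set 'I_k}) :
  #|[set v : vec n k | (setpart v == y) && (im v \subset C)]| = #|C| ^_ #|y|.
Proof.
have -> : [set v : vec n k | (setpart v == y) && (im v \subset C)] =
          vec_of_blocks @: [set f in ffun_on (mem C) | injectiveb f].
  apply/setP => v; rewrite inE; apply/andP/imsetP => [[/eqP vy imC]|[f]].
    have [f f_inj fv] := vec_of_blocksP vy.
    exists f => //; rewrite inE; apply/andP; split; last exact/injectiveP.
    apply/ffun_onP => B; have [i /eqP <-] := block_of_surj B.
    by apply: (subsetP imC); rewrite -fv; apply/imsetP; exists i; rewrite ?ffunE.
  rewrite inE => /andP[/ffun_onP fC /injectiveP f_inj] ->.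
  rewrite setpart_vec_of_blocks // eqxx; split => //.
  by apply/subsetP => _ /imsetP[i _ ->]; rewrite ffunE fC.
rewrite card_in_imset; last first.
  move=> f g _ _ fg; apply/ffunP => B; have [i /eqP <-] := block_of_surj B.
  by have := congr1 (fun w : vec n k => w i) fg; rewrite !ffunE.
by rewrite card_inj_ffuns_on card_sig.
Qed.

Lemma card_setpart_im (C : {set 'I_k}) : #|C| = #|y| ->
  #|[set v : vec n k | (setpart v == y) && (im v == C)]| = #|y|`!.
Proof.
move=> cardC; rewrite -ffactnn -{1}cardC -card_setpart_sub; apply: eq_card => v.
rewrite !inE; case: (boolP (setpart v == y)) => //= /eqP vy.
by rewrite eqEcard (card_im_setpart y_part vy) cardC leqnn andbT.
Qed.

Lemma card_setpart_meet (A : {set 'I_k}) i : i <= #|y| ->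
  #|[set v : vec n k | (setpart v == y) && (#|A :&: im v| == i)]|
  = #|y|`! * ('C(#|A|, i) * 'C(#|~: A|, #|y| - i)).
Proof.
move=> le_iy; rewrite -(card_sets_meet A le_iy) !cardsE -sum1_card.
rewrite (partition_big (@im n k) (fun C => (#|C| == #|y|) && (#|A :&: C| == i))) /=; last first.
  by move=> v /andP[/eqP vy ->]; rewrite (card_im_setpart y_part vy) eqxx.
rewrite mulnC -sum_nat_const; apply: eq_big => // C /andP[/eqP cardC /eqP AC].
rewrite sum1_card -(card_setpart_im cardC) cardsE; apply: eq_card => v.
rewrite /in_mem /=; case: (boolP (im v == C)) => [/eqP ->|]; rewrite ?andbT ?andbF //.
by rewrite AC eqxx andbT.
Qed.

End PartitionVectors.

Local Open Scope ring_scope.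

Lemma fact_natr_neq0 m : m`!%:R != 0 :> rat.
Proof. by rewrite pnatr_eq0 -lt0n fact_gt0. Qed.

Definition burnside_kernel n k a j : rat := (k - j)`!%:R / (k - a)`!%:R * EY n k j.

Lemma Kmat_im n k (u v : vec n k) :
  Kmat u v = burnside_kernel n k #|im u| #|im u :|: im v|.
Proof.
set D := im u :|: im v; set c : rat := (k - #|im u|)`!%:R.
rewrite /Kmat /burnside_kernel stabI_perm_on card_stab -/c big_set /=.
rewrite (big_perm_on _ (fun m => 1 / (c * m%:R ^+ n)) (cardsC_ord D)) setCK /EY card_Sn.
rewrite mulrCA mulrAC divff ?fact_natr_neq0 // mul1r mulrC mulr_sumr; apply: eq_bigr => p _.
by rewrite !mul1r invfM.
Qed.

Lemma Kbar_meet_sum n k (x y : {set {set 'I_n}}) :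
  is_setpart x -> is_setpart y -> (#|x| <= k)%N ->
  Kbar k x y = \sum_(i < #|y|.+1) burnside_kernel n k #|x| (#|x| + #|y| - i)
                                   *+ (#|y|`! * ('C(#|x|, i) * 'C(k - #|x|, #|y| - i))).
Proof.
move=> x_part y_part le_xk.
rewrite /Kbar; case: pickP => [u /eqP ux|no_u]; last first.
  have : (0 < #|[set v : vec n k | (setpart v == x) && (im v \subset setT)]|)%N.
    by rewrite card_setpart_sub // cardsT card_ord ffact_gt0.
  by case/card_gt0P => v; rewrite inE no_u.
have card_u : #|im u| = #|x| by apply: card_im_setpart.
have meet_le v : setpart v = y -> (#|im u :&: im v| <= #|y|)%N.
  by move=> vy; rewrite -(card_im_setpart y_part vy) subset_leq_card ?subsetIr.
pose meet (v : vec n k) : 'I_#|y|.+1 := inord #|im u :&: im v|.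
rewrite (partition_big meet xpredT) //=; apply: eq_bigr => i _.
rewrite (eq_bigr (fun _ => burnside_kernel n k #|x| (#|x| + #|y| - i))); last first.
  move=> v /andP[/eqP vy /eqP vi].
  have union_card : #|im u :|: im v| = (#|x| + #|y| - i)%N.
    rewrite -vi inordK ?ltnS ?meet_le // -card_u -(card_im_setpart y_part vy).
    by rewrite -cardsUI addnK.
  by rewrite Kmat_im union_card card_u.
rewrite sumr_const; congr (_ *+ _).
rewrite -card_u -cardsC_ord -(card_setpart_meet y_part _ (ltn_ord i)) cardsE.
apply: eq_card => v.
rewrite /in_mem /=; case: (boolP (setpart v == y)) => //= /eqP vy.
by rewrite -val_eqE /= inordK // ltnS meet_le.
Qed.

Definition burnside_coef (a b j : nat) : rat :=
  a`!%:R * b`!%:R / ((j - a)`!%:R * (j - b)`!%:R * (a + b - j)`!%:R).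

Definition burnside_sum n k a b : rat :=
  \sum_(0 <= j < (a + b).+1 | [&& a <= j, b <= j & j <= k]%N) burnside_coef a b j * EY n k j.

Lemma meet_term_coef n k a b i : (a <= k)%N -> (i <= b)%N ->
  burnside_kernel n k a (a + b - i) *+ (b`! * ('C(a, i) * 'C(k - a, b - i)))
  = if [&& a <= a + b - i, b <= a + b - i & a + b - i <= k]%N
    then burnside_coef a b (a + b - i) * EY n k (a + b - i) else 0.
Proof.
move=> le_ak le_ib; have [lt_ai|le_ia] := ltnP a i.
  by rewrite bin_small // mul0n muln0 mulr0n ifN //; apply/and3P; case; lia.
have [lt_k|le_k] := ltnP k (a + b - i).
  by rewrite (@bin_small (k - a)) ?muln0 ?mulr0n ?ifN //; [apply/and3P; case; lia | lia].
rewrite ifT; last by apply/and3P; split; lia.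
rewrite -mulr_natr /burnside_kernel /burnside_coef.
have -> : (a + b - i - a = b - i)%N by lia.
have -> : (a + b - i - b = a - i)%N by lia.
have -> : (a + b - (a + b - i) = i)%N by lia.
have -> : (k - (a + b - i) = k - a - (b - i))%N by lia.
have fact_a : a`!%:R = 'C(a, i)%:R * i`!%:R * (a - i)`!%:R :> rat.
  by rewrite -!natrM -mulnA bin_fact.
have fact_ka : (k - a)`!%:R = 'C(k - a, b - i)%:R * (b - i)`!%:R * (k - a - (b - i))`!%:R :> rat.
  by rewrite -!natrM -mulnA bin_fact //; lia.
have binC_neq0 : 'C(k - a, b - i)%:R != 0 :> rat by rewrite pnatr_eq0 -lt0n bin_gt0; lia.
rewrite !natrM fact_a fact_ka.
by field; rewrite binC_neq0 !fact_natr_neq0.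
Qed.

Lemma Kbar_burnside_sum n k (x y : {set {set 'I_n}}) :
  is_setpart x -> is_setpart y -> (#|x| <= k)%N ->
  Kbar k x y = burnside_sum n k #|x| #|y|.
Proof.
move=> x_part y_part le_xk.
rewrite Kbar_meet_sum // /burnside_sum [RHS]big_mkcond big_nat_rev /=.
set a := #|x|; set b := #|y|.
rewrite (big_cat_nat _ (n := b.+1)) //= ?ltnS ?leq_addl //.
rewrite [X in _ + X]big_nat_cond [X in _ + X]big1 ?addr0 => [|j /andP[/andP[lt_bj lt_jab] _]].
  by rewrite big_mkord; apply: eq_bigr => i _; rewrite add0n subSS meet_term_coef // -ltnS.
by rewrite ifN //; apply/and3P; case; lia.
Qed.

Lemma burnside_sumC n k a b : burnside_sum n k a b = burnside_sum n k b a.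
Proof.
rewrite /burnside_sum addnC; apply: eq_big => [j|j _]; first by rewrite andbCA.
by rewrite /burnside_coef addnC [b`!%:R * _]mulrC [(j - b)`!%:R * _]mulrC.
Qed.

Lemma burnside_sum_range n k a b : (a <= b)%N ->
  burnside_sum n k a b = \sum_(b <= j < (minn (a + b) k).+1) burnside_coef a b j * EY n k j.
Proof.
move=> le_ab; rewrite (big_nat_widenl _ _ _ _ _ (leq0n b)).
rewrite (big_nat_widen 0 _ (a + b).+1); last by rewrite ltnS geq_minl.
rewrite /burnside_sum [LHS]big_nat_cond [RHS]big_nat_cond; apply: eq_bigl => j.
rewrite /= !ltnS leq_min; apply/and4P/and3P => [[rj _ bj jk]|[rj bj /andP[jab jk]]].
  by split=> //; apply/andP; split=> //; case/andP: rj.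
by split=> //; apply: leq_trans bj.
Qed.

Theorem proposition3p1 (n k : nat) (x y : {set {set 'I_n}}) :
  (1 <= n)%N -> (n <= k)%N ->
  is_setpart x -> is_setpart y ->
  ((#|x| <= #|y|)%N ->
     Kbar k x y =
     \sum_(#|y| <= j < (minn (#|x| + #|y|) k).+1)
        ((#|x|`!)%:R * (#|y|`!)%:R
          / ((j - #|x|)`!%:R * (j - #|y|)`!%:R * (#|x| + #|y| - j)`!%:R))
        * EY n k j)
  /\ ((#|y| < #|x|)%N -> Kbar k x y = Kbar k y x).
Proof.
move=> _ le_nk x_part y_part.
have le_xk := leq_trans (card_setpart_le x_part) le_nk.
have le_yk := leq_trans (card_setpart_le y_part) le_nk.
split => [le_xy|_]; first by rewrite Kbar_burnside_sum // burnside_sum_range.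
by rewrite !Kbar_burnside_sum // burnside_sumC.
Qed.
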